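(* Let $k\ge1$, $\ell\ge3$, and let $\mathcal M_{k,\ell}$, $G$ and $\pi_{r,s}$ be as in the context. In the decomposition $H_1(\mathcal M_{k,\ell},\mathbb{R})=\bigoplus \pi_{r,s}$ (sum over classes $(r,s)\in\mathbb{Z}_{2k}\times\mathbb{Z}_\ell$ modulo $(r,s)\sim(-r,-s)$ with $r\ne0$, $s\ne0$, $\frac r{2k}+\frac s\ell\notin\mathbb{Z}$, each such representation appearing exactly once), any two distinct $2$-dimensional summands are orthogonal for the intersection form $\omega$ on $H_1(\mathcal M_{k,\ell},\mathbb{R})$.
   Context: Let $R$ be the rotation of $\mathbb{C}$ about $0$ by angle $2\pi/\ell$ and $S(z)=-\bar z$. Let $Q_{even}\subset\mathbb{C}$ be the closed regular polygon whose vertices are the $\ell$-th roots of unity, and $Q_{odd}=-Q_{even}$. Take copies $Q_i$, $i\in\mathbb{Z}_{2k}$, with $Q_i$ a copy of $Q_{even}$ for $i$ even and of $Q_{odd}$ for $i$ odd; its vertices are $A(i,j)=R^j(1)$ ($i$ even), $A(i,j)=-R^j(1)$ ($i$ odd), $j\in\mathbb{Z}_\ell$. For every $i\in\mathbb{Z}_{2k}$, $j\in\mathbb{Z}_\ell$, glue by a translation the segment of $Q_i$ from $A(i,j)$ to the midpoint of the side $[A(i,j),A(i,j+1)]$ to the segment of $Q_{i+1}$ from $A(i+1,j+1)$ to the midpoint of the side $[A(i+1,j),A(i+1,j+1)]$; the result is a compact translation surface $\mathcal M_{k,\ell}$. Let $G$ (of order $4k\ell$) be the group of affine diffeomorphisms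 of $\mathcal M_{k,\ell}$ generated by: $1_{2k}$, mapping each $Q_i$ onto $Q_{i+1}$ by $z\mapsto-z$; $1_\ell$, mapping each $Q_i$ to itself by $z\mapsto Rz$; and $\sigma$, mapping $Q_i$ onto $Q_{1-i}$ by $z\mapsto S(z)$. $G$ acts on $H_1(\mathcal M_{k,\ell},\mathbb{R})$. For $(r,s)\in\mathbb{Z}_{2k}\times\mathbb{Z}_\ell$, $\pi_{r,s}$ is the real representation of $G$ on $\mathbb{R}^2$ sending $\sigma$ to $S$, $1_{2k}$ to the rotation of angle $\pi r/k$, $1_\ell$ to the rotation of angle $2\pi s/\ell$; $\pi_{r,s}\cong\pi_{-r,-s}$, and it is irreducible when $(r,s)$ has order $>2$. The ''summands'' are the corresponding $\pi_{r,s}$-isotypic subspaces of $H_1(\mathcal M_{k,\ell},\mathbb{R})$. *)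

From mathcomp Require Import all_boot all_order all_algebra.
From mathcomp Require Import reals trigo.
Set Implicit Arguments. Unset Strict Implicit. Unset Printing Implicit Defensive.
Import Order.TTheory GRing.Theory Num.Theory.
Local Open Scope ring_scope.

(*  Polygon Q_i (i in Z_{2k}) has vertices A(i,j) and side midpoints M(i,j) *)
(*  (midpoint of [A(i,j),A(i,j+1)]), j in Z_l.                              *)
(*  1-cells: E(i,j) = the glued pair of segments [A(i,j),M(i,j)] in Q_i and *)
(*  [A(i+1,j+1),M(i+1,j)] in Q_{i+1}, oriented from A(i,j) to M(i,j).       *)
(*  0-cells: classes of A's and M's under A(i,j)~A(i+1,j+1), M(i,j)~M(i+1,j)*)
(*  2-cells: Q_i, counterclockwise; boundary traversal of Q_i is            *)
(*    E(i,0), -E(i-1,0), E(i,1), -E(i-1,1), ..., E(i,l-1), -E(i-1,l-1).     *)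
(*  Real cellular chains/cochains in degree 1 are functions nat->nat->R,    *)
(*  only the values at (i,j) with i < 2k, j < l being relevant.             *)

Definition chain (R : Type) := nat -> nat -> R.

Section Surface.
Variables (R : realType) (k l : nat).

Local Notation K := (2 * k)%N.

Definition predK (i : nat) : nat := ((i + K).-1 %% K)%N.
Definition oppK (i : nat) : nat := ((K - i) %% K)%N.
Definition succK (i : nat) : nat := (i.+1 %% K)%N.
Definition succL (j : nat) : nat := (j.+1 %% l)%N.
Definition predL (j : nat) : nat := ((j + l).-1 %% l)%N.
Definition oppL1 (j : nat) : nat := ((l - j).-1 %% l)%N.

Definition pair (c a : chain R) : R :=
  \sum_(i < K) \sum_(j < l) c i j * a i j.

(* 1-cycles: the cellular boundary vanishes, i.e. pairs to zero with the   *)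
(* coboundary of every real function on the 0-cells (vertex classes).      *)
Definition is_cycle (c : chain R) : Prop :=
  forall gA gM : nat -> nat -> R,
    (forall i j, (i < K)%N -> (j < l)%N -> gA i j = gA (succK i) (succL j)) ->
    (forall i j, (i < K)%N -> (j < l)%N -> gM i j = gM (succK i) j) ->
    \sum_(i < K) \sum_(j < l) c i j * (gM i j - gA i j) = 0.

(* homologous: difference is a cellular boundary sum_i a_i dQ_i           *)
(* (the coefficient of E(i,j) in dQ_i is 1, in dQ_{i+1} it is -1).        *)
Definition homologous (c c' : chain R) : Prop :=
  exists a : nat -> R, forall i j, (i < K)%N -> (j < l)%N ->
    c i j - c' i j = a i - a (succK i).

Definition is_cocycle (a : chain R) : Prop :=
  forall i, (i < K)%N -> \sum_(j < l) (a i j - a (predK i) j) = 0.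

(* value of a cochain on the m-th (signed) edge of the boundary of Q_i *)
Definition bseq (a : chain R) (i m : nat) : R :=
  if odd m then - a (predK i) m./2 else a i m./2.

(* cup product of 1-cocycles evaluated on the fundamental class          *)
(* (standard polygon formula: on each face sum_{m<n} a_m b_n             *)
(*  + 1/2 sum_m a_m b_m, along the boundary traversal).                  *)
Definition cupF (a b : chain R) : R :=
  \sum_(i < K) (\sum_(m < 2 * l) \sum_(n < 2 * l | (m < n)%N)
                   bseq a i m * bseq b i n
               + 2^-1 * \sum_(m < 2 * l) bseq a i m * bseq b i m).

Definition PD_dual (x a : chain R) : Prop :=
  is_cocycle a /\ forall b, is_cocycle b -> cupF b a = pair x b.

(* omega(x, y) = <PD^{-1}(x), y> (up to a global sign convention).        *)
Definition omega_orth (x y : chain R) : Prop :=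
  (exists a, PD_dual x a) /\ (forall a, PD_dual x a -> pair y a = 0).

(* Actions on 1-chains of the generators of G (push-forward).            *)
(* 1_{2k}: E(i,j) -> E(i+1,j);  1_l: E(i,j) -> E(i,j+1);                 *)
(* sigma:  E(i,j) -> E(-i,-j-1).                                          *)
Definition act_2k (c : chain R) : chain R := fun i j => c (predK i) j.
Definition act_l (c : chain R) : chain R := fun i j => c i (predL j).
Definition act_sigma (c : chain R) : chain R := fun i j => c (oppK i) (oppL1 j).

Definition lincomb (a : R) (u : chain R) (b : R) (v : chain R) : chain R :=
  fun i j => a * u i j + b * v i j.

(* (u, v) are the images of e1, e2 under a G-equivariant linear map      *)
(* R^2 -> H_1(M, R), for the representation pi_{r,s}:                    *)
(* sigma -> S = diag(-1, 1), 1_{2k} -> rot(pi r / k), 1_l -> rot(2 pi s/l)*)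
Definition rot_equiv (g : chain R -> chain R) (t : R) (u v : chain R) : Prop :=
  homologous (g u) (lincomb (cos t) u (sin t) v) /\
  homologous (g v) (lincomb (- sin t) u (cos t) v).

Definition equiv_pair (r s : nat) (u v : chain R) : Prop :=
  [/\ is_cycle u, is_cycle v,
      rot_equiv act_2k (pi * r%:R / k%:R) u v,
      rot_equiv act_l (2 * pi * s%:R / l%:R) u v &
      homologous (act_sigma u) (lincomb (-1) u 0 v) /\
      homologous (act_sigma v) v].

(* the pi_{r,s}-isotypic subspace of H_1: sum of the images of all       *)
(* G-equivariant maps pi_{r,s} -> H_1 (classes given by cycle reps).     *)
Definition isotypic (r s : nat) (x : chain R) : Prop :=
  is_cycle x /\
  exists (n : nat) (u v : nat -> chain R) (a b : nat -> R),
    (forall t, (t < n)%N -> equiv_pair r s (u t) (v t)) /\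
    homologous x (fun i j => \sum_(t < n) (a t * u t i j + b t * v t i j)).

End Surface.

(* r/(2k) + s/l not an integer, i.e. 2kl does not divide l r + 2k s.      *)
Definition summand_index (k l r s : nat) : bool :=
  [&& (0 < r < 2 * k)%N, (0 < s < l)%N & ~~ (2 * k * l %| l * r + 2 * k * s)%N].

Definition same_class (k l r s r' s' : nat) : bool :=
  ((r == r') && (s == s')) ||
  ((r' == (2 * k - r) %% (2 * k)) && (s' == (l - s) %% l))%N.

(* Write A and L for the actions of 1_{2k} and 1_l on chains.  For any chain W
   the cocycle pd_cocycle (A L W) is Poincare dual to Qcycle W, which is
   homologous to (A L + A - A A L - 1) W = -(1 - A)(1 - A L) W.  On an
   equivariant pair of type pi_{r,s}, A rotates by phi = pi r / k and A L by
   phi + theta with theta = 2 pi s / l; neither angle is a multiple of 2 pi on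
   the index set, so Qcycle is invertible there and every class x of the
   pi_{r,s}-summand is Qcycle W_x with W_x in the same summand.  By
   antisymmetry of the cup product, omega(x, y) is then, up to sign,
   omegaQ x W_y, a bilinear form invariant under A and L simultaneously.  On
   equivariant pairs of types pi_{r,s} and pi_{r',s'} such a form splits into a
   part fixed by the rotations by phi - phi' and theta - theta', and a part
   fixed by those by phi + phi' and theta + theta'; since (r', s') is neither
   (r, s) nor (-r, -s), one rotation of each kind is nontrivial and both parts
   vanish (Schur's lemma). *)

From Pilot Require Import Defs.
From mathcomp Require Import all_boot all_order all_algebra.
From mathcomp Require Import reals trigo.
From mathcomp Require Import zify ring lra.
Set Implicit Arguments. Unset Strict Implicit. Unset Printing Implicit Defensive.
Import Order.TTheory GRing.Theory Num.Theory.
Local Open Scope ring_scope.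

Section CyclicShift.
Variables (n : nat) (n_gt0 : (0 < n)%N).

Lemma pred_mod_succ i : (i < n)%N -> ((i.+1 %% n + n).-1 %% n)%N = i.
Proof.
move=> lt_in; have [e|ne] := eqVneq i.+1 n.
  by rewrite e modnn add0n modn_small; lia.
rewrite (modn_small (_ : i.+1 < n)%N); last lia.
by rewrite addSn /= modnDr modn_small.
Qed.

Lemma succ_mod_pred i : (i < n)%N -> (((i + n).-1 %% n).+1 %% n)%N = i.
Proof.
move=> lt_in; case: i lt_in => [|i] lt_in.
  by rewrite add0n (modn_small (_ : n.-1 < n)%N) ?prednK ?modnn //; lia.
by rewrite addSn /= modnDr !modn_small //; lia.
Qed.

Lemma sum_ord_reindex (V : nmodType) (f g : nat -> nat) (F : nat -> V) :
  (forall i, (i < n)%N -> (f i < n)%N) -> (forall i, (i < n)%N -> g (f i) = i) ->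
  \sum_(i < n) F (f i) = \sum_(i < n) F i.
Proof.
move=> f_lt fK; pose h (i : 'I_n) : 'I_n := Ordinal (f_lt i (ltn_ord i)).
have h_inj : injective h.
  by move=> i j /(congr1 val) /= /(congr1 g); rewrite !fK // => /val_inj.
by rewrite [RHS](reindex_inj h_inj).
Qed.

Lemma sum_ord_succ (V : nmodType) (F : nat -> V) :
  \sum_(i < n) F (i.+1 %% n)%N = \sum_(i < n) F i.
Proof.
apply: (@sum_ord_reindex V (fun i => i.+1 %% n)%N (fun i => (i + n).-1 %% n)%N) => i lt_in.
  exact: ltn_pmod.
exact: pred_mod_succ.
Qed.

Lemma sum_ord_pred (V : nmodType) (F : nat -> V) :
  \sum_(i < n) F ((i + n).-1 %% n)%N = \sum_(i < n) F i.
Proof.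
apply: (@sum_ord_reindex V (fun i => (i + n).-1 %% n)%N (fun i => i.+1 %% n)%N) => i lt_in.
  exact: ltn_pmod.
exact: succ_mod_pred.
Qed.

End CyclicShift.

Lemma sum_ord_double (V : nmodType) (m : nat) (F : nat -> V) :
  \sum_(i < 2 * m) F i = \sum_(j < m) (F (2 * j)%N + F (2 * j).+1).
Proof.
elim: m => [|m IHm]; first by rewrite !big_ord0.
rewrite (_ : 2 * m.+1 = (2 * m).+2)%N; last lia.
by rewrite !big_ord_recr /= IHm addrA (_ : (2 * m).+1 = 2 * m + 1)%N ?addn1.
Qed.

Lemma sum_triangular_mul (V : comNzRingType) (N : nat) (F G : nat -> V) :
  \sum_(m < N) \sum_(n < N | (m < n)%N) F m * G n +
  \sum_(m < N) \sum_(n < N | (m < n)%N) G m * F n +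
  \sum_(m < N) F m * G m = (\sum_(m < N) F m) * (\sum_(n < N) G n).
Proof.
have swap : \sum_(m < N) \sum_(n < N | (m < n)%N) G m * F n =
             \sum_(m < N) \sum_(n < N | (n < m)%N) F m * G n.
  rewrite (exchange_big_dep xpredT) //=.
  by apply: eq_bigr => m _; apply: eq_bigr => n _; rewrite mulrC.
rewrite swap mulr_suml -!big_split /=; apply: eq_bigr => m _.
rewrite mulr_sumr [in RHS](bigD1 m) //= [RHS]addrC; congr (_ + _).
rewrite [RHS](bigID (fun n : 'I_N => (m < n)%N)) /=; congr (_ + _); apply: eq_bigl => n.
  by rewrite andb_idl // => lt_mn; apply: contraTneq lt_mn => ->; rewrite ltnn.
by rewrite -leqNgt ltn_neqAle.
Qed.

Section RotationAlgebra.
Variable R : realFieldType.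

Lemma sqr1B_add_sqr_gt0 (c s : R) : c != 1 -> 0 < (1 - c) ^+ 2 + s ^+ 2.
Proof. by move=> c_neq1; rewrite ltr_pwDl ?sqr_ge0 // exprn_even_gt0 //= subr_eq0 eq_sym. Qed.

Lemma rot_fixed_eq0 (C S x y : R) :
  C != 1 -> x = C * x + S * y -> y = C * y - S * x -> x = 0 /\ y = 0.
Proof.
move=> C_neq1 ex ey.
have e1 : (1 - C) * x = S * y by lra.
have e2 : (1 - C) * y = - S * x by lra.
have C1_neq0 : 1 - C != 0 by rewrite subr_eq0 eq_sym.
have D_gt0 := sqr1B_add_sqr_gt0 S C_neq1.
have Dx0 : ((1 - C) ^+ 2 + S ^+ 2) * x = 0.
  rewrite [LHS](_ : _ = (1 - C) * ((1 - C) * x - S * y) + S * ((1 - C) * y + S * x)).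
    by rewrite e1 e2; ring.
  by ring.
move/eqP: Dx0; rewrite mulf_eq0 (gt_eqF D_gt0) /= => /eqP x0.
split=> //; apply/eqP; move/eqP: e2.
by rewrite x0 mulr0 mulf_eq0 (negbTE C1_neq0).
Qed.

Lemma rot_invariant_bilinear_eq0 (c s c' s' e11 e12 e21 e22 : R) :
  e11 = c * c' * e11 + c * s' * e12 + s * c' * e21 + s * s' * e22 ->
  e12 = - c * s' * e11 + c * c' * e12 - s * s' * e21 + s * c' * e22 ->
  e21 = - s * c' * e11 - s * s' * e12 + c * c' * e21 + c * s' * e22 ->
  e22 = s * s' * e11 - s * c' * e12 - c * s' * e21 + c * c' * e22 ->
  (c * c' + s * s' != 1 -> e11 + e22 = 0 /\ e12 - e21 = 0) /\
  (c * c' - s * s' != 1 -> e11 - e22 = 0 /\ e12 + e21 = 0).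
Proof.
move=> e11E e12E e21E e22E; split=> C_neq1.
  by apply: (rot_fixed_eq0 (S := c * s' - s * c') C_neq1); lra.
by apply: (rot_fixed_eq0 (S := c * s' + s * c') C_neq1); lra.
Qed.

End RotationAlgebra.

Section Angles.
Variable R : realType.

Lemma cos_neq1 (x : R) : 0 < x < pi *+ 2 -> cos x != 1.
Proof.
move=> /andP[x_gt0 x_lt2pi].
have sin_gt0 : 0 < sin (x / 2) by apply: sin_gt0_pi; apply/andP; split; lra.
have -> : x = (x / 2) *+ 2 by rewrite mulr2n; lra.
rewrite cos_mulr2n; apply/eqP => cos2_eq1.
have : sin (x / 2) ^+ 2 = 0 by move: cos2_eq1; rewrite cos2sin2 mulr2n; lra.
by move/eqP; rewrite expf_eq0 /= (gt_eqF sin_gt0).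
Qed.

Lemma cos_pi_ratio_neq1 (N n : nat) : (0 < N)%N -> ~~ (2 * N %| n)%N ->
  cos (pi * n%:R / N%:R) != 1 :> R.
Proof.
move=> N_gt0 ndvd; have N_gt0R : (0 : R) < N%:R by rewrite ltr0n.
have m_gt0 : (0 < n %% (2 * N))%N by rewrite lt0n; move: ndvd; rewrite /dvdn.
have m_lt : (n %% (2 * N) < 2 * N)%N by rewrite ltn_pmod // muln_gt0.
have split_n (p : R) :
  p * n%:R / N%:R = p * (n %% (2 * N))%N%:R / N%:R + p *+ 2 *+ (n %/ (2 * N)).
  rewrite [in LHS](divn_eq n (2 * N)) addnC natrD mulrDr mulrDl; congr (_ + _).
  by rewrite mulnA natrM mulrA mulfK ?gt_eqF // mulr_natr -mulrnA mulnC.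
rewrite split_n periodicn; last exact: cosD2pi.
apply: cos_neq1; apply/andP; split.
  by rewrite !mulr_gt0 ?pi_gt0 ?ltr0n ?invr_gt0.
rewrite -mulrA -[X in _ < X]mulr_natr ltr_pM2l ?pi_gt0 // ltr_pdivrMr //.
by rewrite -natrM ltr_nat.
Qed.

Lemma cos_pi_ratio_sub_neq1 (N a b : nat) : (0 < N)%N ->
  (a < 2 * N)%N -> (b < 2 * N)%N -> a != b ->
  cos (pi * a%:R / N%:R - pi * b%:R / N%:R) != 1 :> R.
Proof.
move=> N_gt0; wlog lt_ba : a b / (b < a)%N => [gen a_lt b_lt a_neq_b|a_lt b_lt _].
  case: (ltngtP a b) => [lt_ab|lt_ba|eq_ab]; last by rewrite eq_ab eqxx in a_neq_b.
    by rewrite -cosN opprB gen // eq_sym.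
  exact: gen.
have sub_ratio (p : R) : p * a%:R / N%:R - p * b%:R / N%:R = p * (a - b)%N%:R / N%:R.
  by rewrite natrB 1?ltnW // mulrBr mulrBl.
rewrite sub_ratio; apply: cos_pi_ratio_neq1 => //.
by apply/negP => /dvdn_leq; lia.
Qed.

Lemma cos_pi_ratio_add_neq1 (N a b : nat) : (0 < N)%N ->
  (0 < a + b < 4 * N)%N -> a + b != (2 * N)%N ->
  cos (pi * a%:R / N%:R + pi * b%:R / N%:R) != 1 :> R.
Proof.
move=> N_gt0 ab_bounds ab_neq.
have add_ratio (p : R) : p * a%:R / N%:R + p * b%:R / N%:R = p * (a + b)%N%:R / N%:R.
  by rewrite natrD mulrDr mulrDl.
rewrite add_ratio; apply: cos_pi_ratio_neq1 => //.
by apply/negP => /dvdnP[[|[|q]] ab_eq]; move: ab_bounds ab_neq; rewrite ab_eq; lia.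
Qed.

(* For an equivariant pair on which 1_{2k} rotates by phi and 1_{2k} 1_l by
   psi, Qcycle acts as multiplication by -(1 - e^(i phi))(1 - e^(i psi)),
   whose real and imaginary parts are Q_re phi psi and Q_im phi psi. *)
Definition Q_re (phi psi : R) : R := sin phi * sin psi - (1 - cos phi) * (1 - cos psi).
Definition Q_im (phi psi : R) : R := (1 - cos phi) * sin psi + sin phi * (1 - cos psi).

Lemma Q_norm_gt0 (phi psi : R) : cos phi != 1 -> cos psi != 1 ->
  0 < Q_re phi psi ^+ 2 + Q_im phi psi ^+ 2.
Proof.
move=> /(sqr1B_add_sqr_gt0 (sin phi)) phi_gt0 /(sqr1B_add_sqr_gt0 (sin psi)) psi_gt0.
rewrite (_ : _ + _ = ((1 - cos phi) ^+ 2 + sin phi ^+ 2) * ((1 - cos psi) ^+ 2 + sin psi ^+ 2)).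
  exact: mulr_gt0.
by rewrite /Q_re /Q_im; ring.
Qed.

Definition Q_solve (phi psi p q : R) : R * R :=
  let a := Q_re phi psi in let b := Q_im phi psi in
  ((a * p + b * q) / (a ^+ 2 + b ^+ 2), (a * q - b * p) / (a ^+ 2 + b ^+ 2)).

Lemma Q_solveK (phi psi p q : R) : cos phi != 1 -> cos psi != 1 ->
  Q_re phi psi * (Q_solve phi psi p q).1 - Q_im phi psi * (Q_solve phi psi p q).2 = p /\
  Q_im phi psi * (Q_solve phi psi p q).1 + Q_re phi psi * (Q_solve phi psi p q).2 = q.
Proof.
move=> /Q_norm_gt0 /[apply] /lt0r_neq0 N_neq0.
by rewrite /Q_solve /=; split; field.
Qed.

End Angles.

Section Surface.
Variables (R : realType) (k l : nat).
Hypotheses (k_gt0 : (0 < k)%N) (l_gt0 : (0 < l)%N).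

Local Notation K := (2 * k)%N.
Local Notation pK := (predK k).
Local Notation sK := (succK k).
Local Notation pL := (predL l).
Local Notation sL := (succL l).
Local Notation hom := (@homologous R k l).

Lemma K_gt0 : (0 < K)%N. Proof. by rewrite muln_gt0. Qed.

Lemma predK_lt i : (pK i < K)%N. Proof. exact: ltn_pmod K_gt0. Qed.
Lemma succK_lt i : (sK i < K)%N. Proof. exact: ltn_pmod K_gt0. Qed.
Lemma predL_lt j : (pL j < l)%N. Proof. exact: ltn_pmod. Qed.

Lemma predK_succK i : (i < K)%N -> pK (sK i) = i.
Proof. exact/pred_mod_succ/K_gt0. Qed.
Lemma succK_predK i : (i < K)%N -> sK (pK i) = i.
Proof. exact/succ_mod_pred/K_gt0. Qed.
Lemma predL_succL j : (j < l)%N -> pL (sL j) = j. Proof. exact/pred_mod_succ. Qed.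
Lemma succL_predL j : (j < l)%N -> sL (pL j) = j. Proof. exact/succ_mod_pred. Qed.

Lemma sum_succK (F : nat -> R) : \sum_(i < K) F (sK i) = \sum_(i < K) F i.
Proof. by rewrite /succK (sum_ord_succ K_gt0 F). Qed.
Lemma sum_predK (F : nat -> R) : \sum_(i < K) F (pK i) = \sum_(i < K) F i.
Proof. by rewrite /predK (sum_ord_pred K_gt0 F). Qed.
Lemma sum_succL (F : nat -> R) : \sum_(j < l) F (sL j) = \sum_(j < l) F j.
Proof. by rewrite /succL (sum_ord_succ l_gt0 F). Qed.
Lemma sum_predL (F : nat -> R) : \sum_(j < l) F (pL j) = \sum_(j < l) F j.
Proof. by rewrite /predL (sum_ord_pred l_gt0 F). Qed.

Definition chain_sum (n : nat) (F : nat -> chain R) : chain R :=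
  fun i j => \sum_(t < n) F t i j.

Lemma homologous_ext (c c' : chain R) :
  (forall i j, (i < K)%N -> (j < l)%N -> c i j = c' i j) -> hom c c'.
Proof. by move=> eq_cc'; exists (fun=> 0) => i j i_lt j_lt; rewrite eq_cc' // !subrr. Qed.

Lemma homologous_refl c : hom c c.
Proof. exact: homologous_ext. Qed.

Lemma homologous_sym c c' : hom c c' -> hom c' c.
Proof.
case=> g c_c'; exists (fun i => - g i) => i j i_lt j_lt.
by rewrite -opprB c_c' // opprB opprK addrC.
Qed.

Lemma homologous_trans c1 c2 c3 : hom c1 c2 -> hom c2 c3 -> hom c1 c3.
Proof.
case=> g c12 [h c23]; exists (fun i => g i + h i) => i j i_lt j_lt.
by rewrite -(subrKA (c2 i j)) c12 // c23 //; ring.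
Qed.

Lemma homologous_lincomb a b u u' v v' : hom u u' -> hom v v' ->
  hom (lincomb a u b v) (lincomb a u' b v').
Proof.
case=> g u_u' [h v_v']; exists (fun i => a * g i + b * h i) => i j i_lt j_lt.
rewrite /lincomb (_ : _ - _ = a * (u i j - u' i j) + b * (v i j - v' i j)); last by ring.
by rewrite u_u' // v_v' //; ring.
Qed.

Lemma homologous_chain_sum n (F F' : nat -> chain R) :
  (forall t, (t < n)%N -> hom (F t) (F' t)) -> hom (chain_sum n F) (chain_sum n F').
Proof.
elim: n => [|n IHn] FF'.
  by apply: homologous_ext => i j _ _; rewrite /chain_sum !big_ord0.
have [g sum_hom] : hom (chain_sum n F) (chain_sum n F') by apply: IHn => t /ltnW /FF'.
have [h last_hom] := FF' n (ltnSn n).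
exists (fun i => g i + h i) => i j i_lt j_lt.
move: (sum_hom i j i_lt j_lt) (last_hom i j i_lt j_lt).
by rewrite /chain_sum !big_ord_recr /=; lra.
Qed.

Lemma homologous_act_2k c c' : hom c c' -> hom (act_2k k c) (act_2k k c').
Proof.
case=> g c_c'; exists (fun i => g (pK i)) => i j i_lt j_lt.
by rewrite /act_2k c_c' ?predK_lt // succK_predK // predK_succK.
Qed.

Lemma pair_ext (c c' a a' : chain R) :
  (forall i j, (i < K)%N -> (j < l)%N -> c i j * a i j = c' i j * a' i j) ->
  pair k l c a = pair k l c' a'.
Proof. by move=> eq_ca; apply: eq_bigr => i _; apply: eq_bigr => j _; apply: eq_ca. Qed.

Lemma pair_homologous (c c' a : chain R) :
  is_cocycle k l a -> hom c c' -> pair k l c a = pair k l c' a.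
Proof.
move=> a_cocycle [g c_c']; apply/eqP; rewrite -subr_eq0 /pair -sumrB; apply/eqP.
have row_succK i : (i < K)%N -> \sum_(j < l) a (sK i) j = \sum_(j < l) a i j.
  move=> i_lt; apply/eqP; rewrite -subr_eq0 -sumrB -{2}(predK_succK i_lt).
  by rewrite a_cocycle ?succK_lt.
transitivity (\sum_(i < K) g i * \sum_(j < l) a i j -
              \sum_(i < K) g (sK i) * \sum_(j < l) a (sK i) j).
  rewrite -sumrB; apply: eq_bigr => i _; rewrite row_succK // -mulrBl mulr_sumr -sumrB.
  by apply: eq_bigr => j _; rewrite -mulrBl c_c'.
by rewrite (sum_succK (fun i => g i * \sum_(j < l) a i j)) subrr.
Qed.

Lemma pair_lincombl (a b : R) (u v z : chain R) :
  pair k l (lincomb a u b v) z = a * pair k l u z + b * pair k l v z.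
Proof.
rewrite /pair !mulr_sumr -big_split; apply: eq_bigr => i _ /=.
by rewrite !mulr_sumr -big_split; apply: eq_bigr => j _ /=; rewrite /lincomb; ring.
Qed.

Lemma pair_lincombr (a b : R) (u v z : chain R) :
  pair k l z (lincomb a u b v) = a * pair k l z u + b * pair k l z v.
Proof.
rewrite /pair !mulr_sumr -big_split; apply: eq_bigr => i _ /=.
by rewrite !mulr_sumr -big_split; apply: eq_bigr => j _ /=; rewrite /lincomb; ring.
Qed.

Lemma pair_chain_suml n (F : nat -> chain R) (z : chain R) :
  pair k l (chain_sum n F) z = \sum_(t < n) pair k l (F t) z.
Proof.
rewrite /pair /chain_sum [RHS]exchange_big; apply: eq_bigr => i _ /=.
by rewrite [RHS]exchange_big; apply: eq_bigr => j _; rewrite mulr_suml.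
Qed.

Lemma pair_chain_sumr n (F : nat -> chain R) (z : chain R) :
  pair k l z (chain_sum n F) = \sum_(t < n) pair k l z (F t).
Proof.
rewrite /pair /chain_sum [RHS]exchange_big; apply: eq_bigr => i _ /=.
by rewrite [RHS]exchange_big; apply: eq_bigr => j _; rewrite mulr_sumr.
Qed.

Lemma bseq_even (a : chain R) i j : Defs.bseq k a i (2 * j) = a i j.
Proof. by rewrite /Defs.bseq mul2n odd_double doubleK. Qed.

Lemma bseq_odd (a : chain R) i j : Defs.bseq k a i (2 * j).+1 = - a (pK i) j.
Proof. by rewrite /Defs.bseq mul2n /= odd_double uphalf_double. Qed.

Lemma cocycle_bseq_sum (a : chain R) i : is_cocycle k l a -> (i < K)%N ->
  \sum_(m < 2 * l) Defs.bseq k a i m = 0.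
Proof.
move=> a_cocycle i_lt; rewrite sum_ord_double -[RHS](a_cocycle i i_lt).
by apply: eq_bigr => j _; rewrite bseq_even bseq_odd.
Qed.

Lemma cupF_antisym (a b : chain R) : is_cocycle k l a -> is_cocycle k l b ->
  cupF k l b a = - cupF k l a b.
Proof.
move=> a_cocycle b_cocycle; apply/eqP; rewrite -subr_eq0 opprK; apply/eqP.
rewrite /cupF -big_split big1 //= => i _.
have diag : \sum_(m < 2 * l) Defs.bseq k b i m * Defs.bseq k a i m =
            \sum_(m < 2 * l) Defs.bseq k a i m * Defs.bseq k b i m.
  by apply: eq_bigr => m _; rewrite mulrC.
have := sum_triangular_mul (2 * l) (Defs.bseq k b i) (Defs.bseq k a i).
by rewrite cocycle_bseq_sum // mul0r diag; lra.
Qed.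

Definition pd_cocycle (W : chain R) : chain R := fun i j => W i j - W i (sL j).

Definition pd_cycle (W : chain R) : chain R :=
  fun i j => W i j + W i (sL j) - W (pK i) j - W (sK i) (sL j).

Lemma pd_cocycle_is_cocycle W : is_cocycle k l (pd_cocycle W).
Proof.
move=> i _; rewrite /pd_cocycle.
rewrite (eq_bigr (fun j : 'I_l => (W i j - W (pK i) j) - (W i (sL j) - W (pK i) (sL j)))).
  by rewrite sumrB (sum_succL (fun j => W i j - W (pK i) j)) subrr.
by move=> j _; ring.
Qed.

(* A primitive of pd_cocycle W along the boundary of Q_i: its value at the
   n-th boundary vertex, A(i,0) being vertex 0 and M(i,j), A(i,j+1) the
   vertices 2j+1, 2j+2. *)
Definition face_pot (W : chain R) (i n : nat) : R :=
  if odd n then W i (sL n./2) - W (pK i) (n./2 %% l)%N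
  else W i (n./2 %% l)%N - W (pK i) (n./2 %% l)%N.

Lemma face_pot_even W i j : face_pot W i (2 * j) = W i (j %% l)%N - W (pK i) (j %% l)%N.
Proof. by rewrite /face_pot mul2n odd_double doubleK. Qed.

Lemma face_pot0 W i : face_pot W i 0 = W i 0%N - W (pK i) 0%N.
Proof. by rewrite /face_pot /= mod0n. Qed.

Lemma face_pot_odd W i j : (j < l)%N -> face_pot W i (2 * j).+1 = W i (sL j) - W (pK i) j.
Proof. by move=> j_lt; rewrite /face_pot mul2n /= odd_double uphalf_double modn_small. Qed.

Lemma face_pot_even_succ W i j : face_pot W i (2 * j).+2 = W i (sL j) - W (pK i) (sL j).
Proof. by rewrite -[(2 * j).+2]addn2 -mulnSr face_pot_even. Qed.

Lemma bseq_pd_cocycle W i n : (n < 2 * l)%N ->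
  Defs.bseq k (pd_cocycle W) i n = face_pot W i n - face_pot W i n.+1.
Proof.
rewrite -(odd_double_half n) -mul2n; case: (odd n) => /= n_lt.
  rewrite add1n bseq_odd face_pot_odd ?face_pot_even_succ; last lia.
  by rewrite /pd_cocycle; ring.
rewrite add0n bseq_even face_pot_even face_pot_odd ?modn_small; try lia.
by rewrite /pd_cocycle; ring.
Qed.

Definition cup_weight (a : chain R) (i m : nat) : R :=
  \sum_(n < 2 * l | (m < n)%N) Defs.bseq k a i n + 2^-1 * Defs.bseq k a i m.

Lemma cupF_weights (a b : chain R) : cupF k l b a =
  \sum_(i < K) \sum_(j < l)
     (b i j * cup_weight a i (2 * j) - b (pK i) j * cup_weight a i (2 * j).+1).
Proof.
apply: eq_bigr => i _; rewrite mulr_sumr -big_split /=.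
rewrite (eq_bigr (fun m : 'I_(2 * l) => Defs.bseq k b i m * cup_weight a i m)); last first.
  by move=> m _; rewrite /cup_weight mulrDr mulr_sumr; ring.
rewrite (sum_ord_double l (fun m => Defs.bseq k b i m * cup_weight a i m)).
by apply: eq_bigr => j _; rewrite bseq_even bseq_odd; ring.
Qed.

Lemma cup_weight_pd_cocycle W i m : (m < 2 * l)%N ->
  cup_weight (pd_cocycle W) i m = (face_pot W i m + face_pot W i m.+1) / 2 - face_pot W i 0.
Proof.
move=> m_lt; rewrite /cup_weight.
have -> : \sum_(n < 2 * l | (m < n)%N) Defs.bseq k (pd_cocycle W) i n =
          \sum_(m.+1 <= n < 2 * l) (face_pot W i n - face_pot W i n.+1).
  rewrite big_geq_mkord; apply: eq_big => [n|n _] //; exact: bseq_pd_cocycle.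
rewrite (@telescope_sumr_eq _ _ _ (fun n => - face_pot W i n)) //; last first.
  by move=> n _; rewrite opprK addrC.
have -> : face_pot W i (2 * l) = face_pot W i 0 by rewrite face_pot_even modnn face_pot0.
by rewrite bseq_pd_cocycle //; field.
Qed.

Lemma cupF_pd_cocycle W (b : chain R) : is_cocycle k l b ->
  cupF k l b (pd_cocycle W) = pair k l (pd_cycle W) b.
Proof.
move=> b_cocycle; pose f i := W (pK i) 0%N - W i 0%N.
(* The cup product produces pd_cycle W up to the boundary of \sum_i f i Q_i. *)
transitivity (pair k l (fun i j => pd_cycle W i j + f i - f (sK i)) b); last first.
  by apply: pair_homologous b_cocycle _; exists f => i j _ _; ring.
set w := cup_weight (pd_cocycle W).
rewrite cupF_weights (eq_bigr (fun i : 'I_K => \sum_(j < l) b i j * w i (2 * j)%N -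
                                 \sum_(j < l) b (pK i) j * w i (2 * j).+1)); last first.
  by move=> i _; rewrite sumrB.
rewrite sumrB -(sum_succK (fun i => \sum_(j < l) b (pK i) j * w i (2 * j).+1)).
rewrite /pair -sumrB; apply: eq_bigr => i _; rewrite -sumrB; apply: eq_bigr => j _.
have i_lt := ltn_ord i; have j_lt := ltn_ord j.
rewrite predK_succK // /w !cup_weight_pd_cocycle; try lia.
rewrite !face_pot0 face_pot_even face_pot_even_succ !face_pot_odd // modn_small //.
by rewrite /pd_cycle /f predK_succK //; field.
Qed.

Lemma PD_dual_pd_cocycle W (x : chain R) :
  hom x (pd_cycle W) -> PD_dual k l x (pd_cocycle W).
Proof.
move=> x_hom; split=> [|b b_cocycle]; first exact: pd_cocycle_is_cocycle.
by rewrite cupF_pd_cocycle // (pair_homologous b_cocycle (homologous_sym x_hom)).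
Qed.

Definition Qcycle (W : chain R) : chain R := pd_cycle (act_2k k (act_l l W)).

(* Up to sign, the intersection number of x with Qcycle W, whose Poincare
   dual is pd_cocycle (act_2k k (act_l l W)). *)
Definition omegaQ (x W : chain R) : R := pair k l x (pd_cocycle (act_2k k (act_l l W))).

Lemma omegaQ_homologousl x x' W : hom x x' -> omegaQ x W = omegaQ x' W.
Proof. exact/pair_homologous/pd_cocycle_is_cocycle. Qed.

Lemma omegaQ_homologousr x W W' : hom W W' -> omegaQ x W = omegaQ x W'.
Proof.
case=> g W_W'; apply: pair_ext => i j _ _; congr (_ * _).
have := W_W' _ _ (predK_lt i) (predL_lt j); have := W_W' _ _ (predK_lt i) (predL_lt (sL j)).
by rewrite /pd_cocycle /act_2k /act_l; lra.
Qed.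

Lemma omegaQ_lincombl (a b : R) (u v W : chain R) :
  omegaQ (lincomb a u b v) W = a * omegaQ u W + b * omegaQ v W.
Proof. exact: pair_lincombl. Qed.

Lemma omegaQ_lincombr (a b : R) (x u v : chain R) :
  omegaQ x (lincomb a u b v) = a * omegaQ x u + b * omegaQ x v.
Proof.
rewrite /omegaQ -pair_lincombr; apply: pair_ext => i j _ _; congr (_ * _).
by rewrite /pd_cocycle /act_2k /act_l /lincomb; ring.
Qed.

Lemma omegaQ_chain_suml n (F : nat -> chain R) W :
  omegaQ (chain_sum n F) W = \sum_(t < n) omegaQ (F t) W.
Proof. exact: pair_chain_suml. Qed.

Lemma omegaQ_chain_sumr n (F : nat -> chain R) x :
  omegaQ x (chain_sum n F) = \sum_(t < n) omegaQ x (F t).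
Proof.
rewrite /omegaQ -(pair_chain_sumr n (fun t => pd_cocycle (act_2k k (act_l l (F t))))).
apply: pair_ext => i j _ _; congr (_ * _).
by rewrite /pd_cocycle /act_2k /act_l /chain_sum sumrB.
Qed.

Lemma omegaQ_act_2k x W : omegaQ (act_2k k x) (act_2k k W) = omegaQ x W.
Proof.
exact: (sum_predK (fun i => \sum_(j < l) x i j * pd_cocycle (act_2k k (act_l l W)) i j)).
Qed.

Lemma omegaQ_act_l x W : omegaQ (act_l l x) (act_l l W) = omegaQ x W.
Proof.
apply: eq_bigr => i _.
rewrite -(sum_predL (fun j => x i j * pd_cocycle (act_2k k (act_l l W)) i j)).
by apply: eq_bigr => j _; rewrite /pd_cocycle /act_2k /act_l succL_predL // predL_succL.
Qed.

Lemma act_2k_lincomb (a b : R) (x y : chain R) :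
  act_2k k (lincomb a x b y) = lincomb a (act_2k k x) b (act_2k k y).
Proof. by []. Qed.

Lemma act_l_lincomb (a b : R) (x y : chain R) :
  act_l l (lincomb a x b y) = lincomb a (act_l l x) b (act_l l y).
Proof. by []. Qed.

Section EquivariantMap.
Variable g : chain R -> chain R.
Hypothesis g_lincomb :
  forall (a b : R) (x y : chain R), g (lincomb a x b y) = lincomb a (g x) b (g y).

Lemma rot_equiv_lincomb t u v p q : rot_equiv k l g t u v ->
  hom (g (lincomb p u q v)) (lincomb (cos t * p - sin t * q) u (sin t * p + cos t * q) v).
Proof.
case=> gu gv; rewrite g_lincomb.
apply: homologous_trans (homologous_lincomb p q gu gv) _.
by apply: homologous_ext => i j _ _; rewrite /lincomb; ring.
Qed.

Hypothesis g_omegaQ : forall x W, omegaQ (g x) (g W) = omegaQ x W.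

Lemma omegaQ_rot_equiv t t' u v u' v' :
  rot_equiv k l g t u v -> rot_equiv k l g t' u' v' ->
  (cos (t - t') != 1 -> omegaQ u u' + omegaQ v v' = 0 /\ omegaQ u v' - omegaQ v u' = 0) /\
  (cos (t + t') != 1 -> omegaQ u u' - omegaQ v v' = 0 /\ omegaQ u v' + omegaQ v u' = 0).
Proof.
move=> [gu gv] [gu' gv'].
have transport x x' W W' : hom (g x) x' -> hom (g W) W' -> omegaQ x W = omegaQ x' W'.
  by move=> gx gW; rewrite -g_omegaQ (omegaQ_homologousl _ gx) (omegaQ_homologousr _ gW).
rewrite cosB cosD; apply: rot_invariant_bilinear_eq0.
- by rewrite {1}(transport _ _ _ _ gu gu') omegaQ_lincombl !omegaQ_lincombr; ring.
- by rewrite {1}(transport _ _ _ _ gu gv') omegaQ_lincombl !omegaQ_lincombr; ring.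
- by rewrite {1}(transport _ _ _ _ gv gu') omegaQ_lincombl !omegaQ_lincombr; ring.
- by rewrite {1}(transport _ _ _ _ gv gv') omegaQ_lincombl !omegaQ_lincombr; ring.
Qed.

End EquivariantMap.

Local Notation phi r := (pi * r%:R / k%:R : R).
Local Notation theta s := (2 * pi * s%:R / l%:R : R).

Lemma theta_pi_ratio s : theta s = pi * (2 * s)%N%:R / l%:R.
Proof. by rewrite natrM mulrA [2 * _]mulrC. Qed.

Lemma omegaQ_equiv_pair_eq0 r s r' s' (u v u' v' : chain R) :
  summand_index k l r s -> summand_index k l r' s' -> ~~ same_class k l r s r' s' ->
  equiv_pair k l r s u v -> equiv_pair k l r' s' u' v' ->
  [/\ omegaQ u u' = 0, omegaQ u v' = 0, omegaQ v u' = 0 & omegaQ v v' = 0].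
Proof.
move=> idx idx' diff [_ _ uvA uvL _] [_ _ uvA' uvL' _].
have [A_sub A_add] := omegaQ_rot_equiv omegaQ_act_2k uvA uvA'.
have [L_sub L_add] := omegaQ_rot_equiv omegaQ_act_l uvL uvL'.
case/and3P: idx => /andP[r_gt0 r_lt] /andP[s_gt0 s_lt] _.
case/and3P: idx' => /andP[r'_gt0 r'_lt] /andP[s'_gt0 s'_lt] _.
move: diff; rewrite /same_class negb_or !negb_and !modn_small; try lia.
case/andP=> diff_sub diff_add.
have [sub1 sub2] : omegaQ u u' + omegaQ v v' = 0 /\ omegaQ u v' - omegaQ v u' = 0.
  case/orP: diff_sub => [r_neq|s_neq]; [apply: A_sub | apply: L_sub; rewrite !theta_pi_ratio];
    apply: cos_pi_ratio_sub_neq1; lia.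
have [add1 add2] : omegaQ u u' - omegaQ v v' = 0 /\ omegaQ u v' + omegaQ v u' = 0.
  case/orP: diff_add => [r_neq|s_neq]; [apply: A_add | apply: L_add; rewrite !theta_pi_ratio];
    apply: cos_pi_ratio_add_neq1; lia.
by split; lra.
Qed.

Lemma cos_phi_neq1 r : (0 < r < K)%N -> cos (phi r) != 1.
Proof. by move=> r_bounds; apply: cos_pi_ratio_neq1 => //; apply/negP => /dvdn_leq; lia. Qed.

Lemma cos_phi_theta_neq1 r s : summand_index k l r s -> cos (phi r + theta s) != 1.
Proof.
case/and3P=> _ _ ndvd.
have ratio (p : R) : p * r%:R / k%:R + 2 * p * s%:R / l%:R =
                     p * (l * r + 2 * k * s)%N%:R / (k * l)%N%:R.
  by rewrite natrD !natrM; field; rewrite !pnatr_eq0 -!lt0n k_gt0 l_gt0.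
by rewrite ratio; apply: cos_pi_ratio_neq1; rewrite ?muln_gt0 ?k_gt0 // mulnA.
Qed.

Lemma Qcycle_lincomb ph th (alpha beta : R) (u v : chain R) :
  rot_equiv k l (act_2k k) ph u v -> rot_equiv k l (act_l l) th u v ->
  hom (Qcycle (lincomb alpha u beta v))
      (lincomb (Q_re ph (ph + th) * alpha - Q_im ph (ph + th) * beta) u
               (Q_im ph (ph + th) * alpha + Q_re ph (ph + th) * beta) v).
Proof.
move=> uvA uvL; set W := lincomb alpha u beta v.
have AW := rot_equiv_lincomb act_2k_lincomb alpha beta uvA.
have LW := rot_equiv_lincomb act_l_lincomb alpha beta uvL.
have ALW := homologous_trans (homologous_act_2k LW) (rot_equiv_lincomb act_2k_lincomb _ _ uvA).
have AALW := homologous_trans (homologous_act_2k ALW) (rot_equiv_lincomb act_2k_lincomb _ _ uvA).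
apply: (@homologous_trans _ (lincomb 1 (lincomb 1 (act_2k k (act_l l W)) 1 (act_2k k W))
                               (-1) (lincomb 1 (act_2k k (act_2k k (act_l l W))) 1 W))).
  apply: homologous_ext => i j i_lt j_lt.
  by rewrite /Qcycle /pd_cycle /lincomb /act_2k /act_l predL_succL // predK_succK //; ring.
apply: homologous_trans (homologous_lincomb _ _ (homologous_lincomb _ _ ALW AW)
                           (homologous_lincomb _ _ AALW (homologous_refl W))) _.
by apply: homologous_ext => i j _ _; rewrite /W /lincomb /Q_re /Q_im cosD sinD; ring.
Qed.

Lemma lincomb_homologous_Qcycle ph th (p q : R) (u v : chain R) :
  rot_equiv k l (act_2k k) ph u v -> rot_equiv k l (act_l l) th u v ->
  cos ph != 1 -> cos (ph + th) != 1 ->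
  hom (lincomb p u q v) (Qcycle (lincomb (Q_solve ph (ph + th) p q).1 u
                                         (Q_solve ph (ph + th) p q).2 v)).
Proof.
move=> uvA uvL cos_ph cos_psi; have [re_eq im_eq] := Q_solveK p q cos_ph cos_psi.
apply: homologous_sym; apply: homologous_trans (Qcycle_lincomb _ _ uvA uvL) _.
by rewrite re_eq im_eq; apply: homologous_refl.
Qed.

Lemma Qcycle_chain_sum n (F : nat -> chain R) :
  hom (chain_sum n (fun t => Qcycle (F t))) (Qcycle (chain_sum n F)).
Proof.
apply: homologous_ext => i j _ _.
by rewrite /chain_sum /Qcycle /pd_cycle /act_2k /act_l !sumrB big_split.
Qed.

Lemma isotypic_Qcycle r s x : summand_index k l r s -> isotypic k l r s x ->
  exists n (u v : nat -> chain R) (a b : nat -> R),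
    (forall t, (t < n)%N -> equiv_pair k l r s (u t) (v t)) /\
    hom x (Qcycle (chain_sum n (fun t => lincomb (a t) (u t) (b t) (v t)))).
Proof.
move=> idx [_ [n [u [v [p [q [uv_equiv x_hom]]]]]]].
pose sol t := Q_solve (phi r) (phi r + theta s) (p t) (q t).
exists n, u, v, (fun t => (sol t).1), (fun t => (sol t).2); split=> //.
apply: homologous_trans x_hom _; apply: homologous_trans (Qcycle_chain_sum _ _).
apply: (homologous_chain_sum (F := fun t => lincomb (p t) (u t) (q t) (v t))) => t t_lt.
have [_ _ uvA uvL _] := uv_equiv t t_lt.
apply: lincomb_homologous_Qcycle uvA uvL _ _; last exact: cos_phi_theta_neq1.
by case/and3P: idx => r_bounds _ _; apply: cos_phi_neq1.
Qed.

Lemma omegaQ_isotypic_eq0 r s r' s' x n (u v : nat -> chain R) (a b : nat -> R) :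
  summand_index k l r s -> summand_index k l r' s' -> ~~ same_class k l r s r' s' ->
  isotypic k l r s x -> (forall t, (t < n)%N -> equiv_pair k l r' s' (u t) (v t)) ->
  omegaQ x (chain_sum n (fun t => lincomb (a t) (u t) (b t) (v t))) = 0.
Proof.
move=> idx idx' diff [_ [m [u0 [v0 [p [q [uv0_equiv x_hom]]]]]]] uv_equiv.
rewrite (omegaQ_homologousl _ x_hom).
rewrite (omegaQ_chain_suml m (fun t => lincomb (p t) (u0 t) (q t) (v0 t))).
apply: big1 => t _; rewrite omegaQ_lincombl !omegaQ_chain_sumr.
have pairs_eq0 (t' : 'I_n) := omegaQ_equiv_pair_eq0 idx idx' diff
  (uv0_equiv t (ltn_ord t)) (uv_equiv t' (ltn_ord t')).
rewrite !big1 ?mulr0 ?addr0 // => t' _; have [e1 e2 e3 e4] := pairs_eq0 t';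
  by rewrite omegaQ_lincombr ?e1 ?e2 ?e3 ?e4 !mulr0 addr0.
Qed.

End Surface.

Theorem mainTheorem2 (R : realType) (k l : nat) (hk : (1 <= k)%N) (hl : (3 <= l)%N)
  (r s r' s' : nat) :
  summand_index k l r s -> summand_index k l r' s' ->
  ~~ same_class k l r s r' s' ->
  forall x y : chain R,
    isotypic k l r s x -> isotypic k l r' s' y ->
    omega_orth k l x y.
Proof.
move=> idx idx' diff x y x_iso y_iso.
have l_gt0 : (0 < l)%N by apply: leq_trans hl.
have [n [u [v [a [b [_ x_hom]]]]]] := isotypic_Qcycle hk l_gt0 idx x_iso.
have [n' [u' [v' [a' [b' [uv_equiv' y_hom]]]]]] := isotypic_Qcycle hk l_gt0 idx' y_iso.
split; first exact: ex_intro _ _ (PD_dual_pd_cocycle hk l_gt0 x_hom).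
move=> c [c_cocycle c_dual]; have [y_cocycle y_dual] := PD_dual_pd_cocycle hk l_gt0 y_hom.
rewrite -(y_dual c c_cocycle) (cupF_antisym y_cocycle c_cocycle) (c_dual _ y_cocycle).
have := omegaQ_isotypic_eq0 hk l_gt0 a' b' idx idx' diff x_iso uv_equiv'.
by rewrite /omegaQ => ->; rewrite oppr0.
Qed.
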